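(* Let $k=3$, $t\ge 2$, $m=2^t-3$, and let $n$ be an integer with $0\le n\le m$, $i=m-n$. Then in $\mathbb{F}_2[w_2,w_3]$, \[ q_iq_n+q_{i+1}q_{n-1}+w_3q_{i-1}q_{n-2}=0, \] a homogeneous relation of degree $2^t-3$ among $q_{n-2},q_{n-1},q_n$.
   Context: In $\mathbb{F}_2[w_2,w_3]$ ($\deg w_2=2,\deg w_3=3$), $q_0=1$, $q_m=0$ for $m<0$, and $q_m=w_2q_{m-2}+w_3q_{m-3}$ for $m\ge1$. *)

From HB Require Import structures.
From mathcomp Require Import all_boot all_order all_algebra.
From mathcomp Require Import ssrint zmodp.
From mathcomp Require Import mpoly.
Set Implicit Arguments. Unset Strict Implicit. Unset Printing Implicit Defensive.
Import GRing.Theory.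
Local Open Scope ring_scope.

(* The polynomial ring F_2[w2, w3]: bivariate polynomials over 'F_2,
   with w2 := 'X_0 and w3 := 'X_1 (weights deg w2 = 2, deg w3 = 3 are a
   grading convention only and play no role in the identity). *)
Definition F2W := {mpoly 'F_2[2]}.
Definition w2 : F2W := 'X_(0 : 'I_2).
Definition w3 : F2W := 'X_(1 : 'I_2).

(* q_m for m >= 0, computed from q_0 = 1, q_m = 0 for m < 0 and
   q_m = w2 q_{m-2} + w3 q_{m-3} (m >= 1):
     q_1 = w2 q_{-1} + w3 q_{-2} = 0,  q_2 = w2 q_0 + w3 q_{-1} = w2. *)
Fixpoint qnat (m : nat) : F2W :=
  match m with
  | 0 => 1
  | 1 => 0
  | 2 => w2
  | (m'.+1 as m1).+2 => w2 * qnat m1 + w3 * qnat m'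
  end.

Definition q (m : int) : F2W :=
  match m with
  | Posz k => qnat k
  | Negz _ => 0
  end.

From mathcomp Require Import all_boot all_order all_algebra.
From mathcomp Require Import ssrint zmodp mpoly.
From mathcomp Require Import zify ring.
Set Implicit Arguments. Unset Strict Implicit.
Local Open Scope ring_scope.
Import GRing.Theory.

(* Work with any integer-indexed sequence f in a commutative
   ring with f_m = 0 for m < 0, f_0 = 1 and f_m = c2 f_{m-2} + c3 f_{m-3}
   for m >= 1.  For such f put
       S(a, b) := f_a f_b + f_{a+1} f_{b-1} + c3 f_{a-1} f_{b-2}.
   Unfolding f_{a+2} and f_b by the recurrence shows that S is invariant
   under (a, b) |-> (a+1, b-1); sliding all of b into a gives the addition
   formula S(a, b) = f_{a+b} for a, b >= 0.  Taking a = N, b = N+1 in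
   characteristic 2, the first two terms of S cancel, so
   f_{2N+1} = c3 f_{N-1}^2.  Since 2^{t+1} - 3 = 2(2^t - 2) + 1, induction
   on t from f_1 = 0 gives f_{2^t-3} = 0 for t >= 2.  The theorem is the
   addition formula with a = i, b = n, a + b = 2^t - 3, applied to q,
   which satisfies these hypotheses with c2 = w2, c3 = w3 in F_2[w2, w3]. *)

Section RecurrentSequence.

Variable R : comPzRingType.
Variables (c2 c3 : R) (f : int -> R).
Hypothesis f_neg : forall m : int, m < 0 -> f m = 0.
Hypothesis f0 : f 0 = 1.
Hypothesis f_rec : forall m : int, 1 <= m -> f m = c2 * f (m - 2) + c3 * f (m - 3).

Definition trinomial (a b : int) : R :=
  f a * f b + f (a + 1) * f (b - 1) + c3 * f (a - 1) * f (b - 2).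

Lemma trinomial_shift (a b : int) :
  -1 <= a -> 1 <= b -> trinomial (a + 1) (b - 1) = trinomial a b.
Proof.
move=> Ha Hb; rewrite /trinomial.
have -> : a + 1 + 1 = a + 2 by ring.
have -> : a + 1 - 1 = a by ring.
have -> : b - 1 - 1 = b - 2 by ring.
have -> : b - 1 - 2 = b - 3 by ring.
rewrite [f (a + 2)]f_rec; last by lia.
rewrite (f_rec Hb).
have -> : a + 2 - 2 = a by ring.
have -> : a + 2 - 3 = a - 1 by ring.
ring.
Qed.

Lemma trinomial_sum (k : nat) (a : int) : 0 <= a -> trinomial a k%:Z = f (a + k%:Z).
Proof.
elim: k a => [|k IH] a Ha.
  by rewrite /trinomial f0 [f (0 - 1)]f_neg // [f (0 - 2)]f_neg // addr0 mulr1 !mulr0 !addr0.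
rewrite -trinomial_shift; [|lia|lia].
have -> : k.+1%:Z - 1 = k%:Z by lia.
by rewrite IH; [congr f; lia | lia].
Qed.

Hypothesis char2 : 2%:R = 0 :> R.

Lemma f_odd_double (N : int) : 0 <= N -> f (2 * N + 1) = c3 * f (N - 1) ^+ 2.
Proof.
move=> HN; have := @trinomial_sum `|N|.+1 N HN.
have -> : `|N|.+1%:Z = N + 1 by lia.
rewrite /trinomial.
have -> : N + 1 - 1 = N by ring.
have -> : N + 1 - 2 = N - 1 by ring.
have -> : N + (N + 1) = 2 * N + 1 by ring.
move=> <-.
have -> : f N * f (N + 1) + f (N + 1) * f N = 2%:R * (f N * f (N + 1)) by ring.
by rewrite char2 mul0r add0r expr2 mulrA.
Qed.

Lemma f_pow2_sub3 (t : nat) : (2 <= t)%N -> f ((2 ^ t)%:Z - 3) = 0.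
Proof.
elim: t => [|t IH] // Ht.
have [Ht2 | Ht2] := ltnP t 2.
  have -> : t = 1%N by lia.
  by rewrite f_rec // !f_neg // !mulr0 addr0.
have P4 : (4 <= 2 ^ t)%N by rewrite -[4%N]/(2 ^ 2)%N leq_exp2l.
have -> : (2 ^ t.+1)%N%:Z - 3 = 2 * ((2 ^ t)%:Z - 2) + 1 by rewrite expnS; lia.
rewrite f_odd_double; last by lia.
have -> : (2 ^ t)%:Z - 2 - 1 = (2 ^ t)%:Z - 3 by ring.
by rewrite IH // expr2 !mulr0.
Qed.

End RecurrentSequence.

Lemma q_neg (m : int) : m < 0 -> q m = 0.
Proof. by case: m. Qed.

Lemma q_rec (m : int) : 1 <= m -> q m = w2 * q (m - 2) + w3 * q (m - 3).
Proof.
case: m => [[|[|[|k]]]|k] // _.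
- by rewrite /= !mulr0 addr0.
- by rewrite /= mulr1 mulr0 addr0.
- have -> : k.+3%:Z - 2 = k.+1%:Z by lia.
  by have -> : k.+3%:Z - 3 = k%:Z by lia.
Qed.

Lemma F2W_char2 : 2%:R = 0 :> F2W.
Proof.
have two_Fp : 2%:R = 0 :> 'F_2 by apply: (@pchar_Fp_0 2).
by rewrite -(rmorph_nat (@mpolyC 2 'F_2)) two_Fp rmorph0.
Qed.

Theorem mainTheorem9 (t : nat) (n : int) :
  (2 <= t)%N ->
  let m : int := (2 ^ t)%:Z - 3 in
  0 <= n -> n <= m ->
  let i := m - n in
  q i * q n + q (i + 1) * q (n - 1) + w3 * q (i - 1) * q (n - 2) = 0.
Proof.
move=> Ht m Hn Hnm i.
have -> : n = `|n|%N%:Z by lia.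
rewrite -[LHS]/(trinomial w3 q i `|n|%N).
rewrite (trinomial_sum q_neg erefl q_rec); last by lia.
have -> : i + `|n|%N%:Z = m by rewrite /i; lia.
exact: (f_pow2_sub3 q_neg erefl q_rec F2W_char2).
Qed.
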